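(* Let $F$ be an infinite field, $n\ge2$, and $g\in\mathbb{Z}_n\setminus\{0\}$. Let $\mathcal{B}_g=\{[z,a_1y_1,\dots,a_my_m]\mid m\ge1,\ a_i>0\}$ where $z$ is a fixed variable of degree $g$. Then: (i) if $f,h\in\mathcal{B}_g$ and $V_f\le V_h$, then $h\in\langle\{f\}\cup I\rangle_{T_{\mathbb{Z}_n}}$; (ii) $(\mathcal{B}_g,\le_{\mathcal{B}_g})$ has the finite basis property; (iii) for every $T_{\mathbb{Z}_n}$-ideal $J\supseteq I$, with $\mathcal{A}_g=J\cap\mathcal{B}_g$, there is a finite subset $\mathcal{A}'_g\subseteq\mathcal{A}_g$ with $\langle\mathcal{A}_g\cup I\rangle_{T_{\mathbb{Z}_n}}=\langle\mathcal{A}'_g\cup I\rangle_{T_{\mathbb{Z}_n}}$.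
   Context: $UT_n(F)^{(-)}$: $n\times n$ upper triangular matrices with bracket $[a,b]=ab-ba$ and canonical $\mathbb{Z}_n$-grading (degree-$k$ component spanned by $e_{ij}$ with $j-i=k$). $\mathcal{L}_{\mathbb{Z}_n}$ is the free Lie algebra on variables $y_1,y_2,\dots$ of degree $0$ and $z^{g}_1,z^g_2,\dots$ of degree $g$ for each $g\ne0$; $I$ is the $T_{\mathbb{Z}_n}$-ideal of graded identities of $UT_n(F)^{(-)}$; $\langle S\rangle_{T_{\mathbb{Z}_n}}$ is the smallest graded ideal containing $S$ invariant under degree-preserving endomorphisms. Commutators are left normed; $[z,a_1y_1,\dots,a_my_m]$ has $y_i$ repeated $a_i$ times. $V_f=(a_1,\dots,a_m)$, and $(a_1,\dots,a_m)\le(a'_1,\dots,a'_r)$ iff there is a strictly increasing $\varphi:\{1,\dots,m\}\to\{1,\dots,r\}$ with $a_i\le a'_{\varphi(i)}$; $f\le_{\mathcal{B}_g}h$ iff $V_f\le V_h$. Finite basis property: every infinite sequence has an infinite non-decreasing subsequence. *)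

From mathcomp Require Import all_boot all_order all_algebra.
Set Implicit Arguments. Unset Strict Implicit. Unset Printing Implicit Defensive.
Import GRing.Theory.
Local Open Scope ring_scope.

(* Graded variables.  The grading group Z_n is represented by 'I_n (with    *)
(* the variables of degree 0 are the y_i, those of degree g <> 0 are the    *)
(* z^g_i.                                                                   *)
Definition gvar (n : nat) := ('I_n * nat)%type.
Definition gdeg {n : nat} (x : gvar n) : 'I_n := x.1.

Inductive lterm (F : Type) (n : nat) : Type :=
| TVar of gvar n
| TZero
| TAdd of lterm F n & lterm F n
| TScale of F & lterm F n
| TBr of lterm F n & lterm F n.
Arguments TZero {F n}.
Arguments TVar {F n}.
Arguments TAdd {F n}.
Arguments TScale {F n}.
Arguments TBr {F n}.

Section FreeLie.
Variables (F : fieldType) (n : nat).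
Notation term := (lterm F n).

(* The least congruence making terms a Lie algebra over F: terms modulo   *)
(* lie_eq form the free Lie algebra L_{Z_n} on the graded variables.       *)
Inductive lie_eq : term -> term -> Prop :=
| le_refl a : lie_eq a a
| le_sym a b : lie_eq a b -> lie_eq b a
| le_trans a b c : lie_eq a b -> lie_eq b c -> lie_eq a c
| le_add a a' b b' : lie_eq a a' -> lie_eq b b' -> lie_eq (TAdd a b) (TAdd a' b')
| le_scale c a a' : lie_eq a a' -> lie_eq (TScale c a) (TScale c a')
| le_br a a' b b' : lie_eq a a' -> lie_eq b b' -> lie_eq (TBr a b) (TBr a' b')
| le_addA a b c : lie_eq (TAdd (TAdd a b) c) (TAdd a (TAdd b c))
| le_addC a b : lie_eq (TAdd a b) (TAdd b a)
| le_add0 a : lie_eq (TAdd a TZero) a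
| le_addN a : lie_eq (TAdd a (TScale (-1) a)) TZero
| le_scale1 a : lie_eq (TScale 1 a) a
| le_scaleA c d a : lie_eq (TScale c (TScale d a)) (TScale (c * d) a)
| le_scaleDr c a b : lie_eq (TScale c (TAdd a b)) (TAdd (TScale c a) (TScale c b))
| le_scaleDl c d a : lie_eq (TScale (c + d) a) (TAdd (TScale c a) (TScale d a))
| le_brDl a b c : lie_eq (TBr (TAdd a b) c) (TAdd (TBr a c) (TBr b c))
| le_brDr a b c : lie_eq (TBr a (TAdd b c)) (TAdd (TBr a b) (TBr a c))
| le_brZl c a b : lie_eq (TBr (TScale c a) b) (TScale c (TBr a b))
| le_brZr c a b : lie_eq (TBr a (TScale c b)) (TScale c (TBr a b))
| le_brxx a : lie_eq (TBr a a) TZero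
| le_jacobi a b c :
    lie_eq (TAdd (TBr (TBr a b) c) (TAdd (TBr (TBr b c) a) (TBr (TBr c a) b))) TZero.

Inductive shom : 'I_n -> term -> Prop :=
| shom_var (x : gvar n) : shom (gdeg x) (TVar x)
| shom_zero k : shom k TZero
| shom_add k a b : shom k a -> shom k b -> shom k (TAdd a b)
| shom_scale k c a : shom k a -> shom k (TScale c a)
| shom_br (i j k : 'I_n) a b :
    shom i a -> shom j b -> ((i + j) %% n)%N = k :> nat -> shom k (TBr a b).

Definition homogeneous (k : 'I_n) (t : term) : Prop :=
  exists u, shom k u /\ lie_eq t u.

Definition tsum (s : seq term) : term := foldr (@TAdd F n) TZero s.

(* Substitution of variables = endomorphism of the free Lie algebra. *)
Fixpoint tsubst (sigma : gvar n -> term) (t : term) : term :=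
  match t with
  | TVar x => sigma x
  | TZero => TZero
  | TAdd a b => TAdd (tsubst sigma a) (tsubst sigma b)
  | TScale c a => TScale c (tsubst sigma a)
  | TBr a b => TBr (tsubst sigma a) (tsubst sigma b)
  end.

Definition graded_subst (sigma : gvar n -> term) : Prop :=
  forall x, homogeneous (gdeg x) (sigma x).

(* J (a set of elements of L, i.e. a lie_eq-closed predicate on terms) is *)
(* a T_{Z_n}-ideal: a graded ideal invariant under graded endomorphisms.   *)
Definition is_Tideal (J : term -> Prop) : Prop :=
  [/\ (forall a b, J a -> lie_eq a b -> J b),
      J TZero,
      (forall a b, J a -> J b -> J (TAdd a b)),
      (forall c a, J a -> J (TScale c a)) &
      (forall a b, J a -> J (TBr a b) /\ J (TBr b a))] /\
  (
      (forall t, J t -> exists s : seq term,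
          (forall i, (i < size s)%N ->
             J (nth TZero s i) /\ exists k, homogeneous k (nth TZero s i)) /\
          lie_eq t (tsum s)) /\
      (forall sigma t, graded_subst sigma -> J t -> J (tsubst sigma t))).

Definition Tgen (S : term -> Prop) (t : term) : Prop :=
  forall J, is_Tideal J -> (forall u, S u -> J u) -> J t.

Fixpoint eval (phi : gvar n -> 'M[F]_n) (t : term) : 'M[F]_n :=
  match t with
  | TVar x => phi x
  | TZero => 0
  | TAdd a b => eval phi a + eval phi b
  | TScale c a => c *: eval phi a
  | TBr a b => eval phi a *m eval phi b - eval phi b *m eval phi a
  end.

Definition graded_eval (phi : gvar n -> 'M[F]_n) : Prop :=
  forall x (i j : 'I_n), phi x i j != 0 -> (i <= j)%N && (j - i == gdeg x)%N.

(* I : the graded identities of UT_n(F)^(-). *)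
Definition graded_identity (t : term) : Prop :=
  forall phi, graded_eval phi -> eval phi t = 0.

(* The element [z, a_1 y_1, ..., a_m y_m] with z = z^g_1 and y_i = (0, i). *)
Definition yvar (g : 'I_n) (i : nat) : term := TVar (insubd g 0%N, i).

Definition bterm (g : 'I_n) (a : seq nat) : term :=
  foldl (fun t p => iter p.2 (fun u => TBr u (yvar g p.1)) t)
        (TVar (g, 1%N)) (zip (iota 1 (size a)) a).

End FreeLie.

Definition valid_exp (a : seq nat) : Prop :=
  (0 < size a)%N /\ all (fun x => 0 < x)%N a.

Definition vle (a b : seq nat) : Prop :=
  exists phi : nat -> nat,
    (forall i j, (i < j < size a)%N -> (phi i < phi j)%N) /\
    (forall i, (i < size a)%N ->
       (phi i < size b)%N /\ (nth 0 a i <= nth 0 b (phi i))%N).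

From mathcomp Require Import all_boot all_order all_algebra zify.
From Stdlib Require Import Classical ClassicalEpsilon.
Set Implicit Arguments. Unset Strict Implicit. Unset Printing Implicit Defensive.
Import GRing.Theory.

(* Every element of B_g is the left-normed bracket of z with a word in the
   degree-zero variables, whose letter y_i occurs a_i times.  In UT_n the
   degree-zero variables evaluate to diagonal matrices; these commute, hence so
   do their adjoint actions, and modulo I such a bracket only depends on the
   multiset of its letters.  If V_f <= V_h, renaming the variables of f and
   bracketing with further y's therefore yields h modulo I, which is (i).
   Part (ii) is Higman's lemma for (seq nat, <=), proved by Nash-Williams'
   minimal bad sequence argument, and (iii) follows since every upward closed
   subset of a well-quasi-order is generated by finitely many elements. *)

Lemma exists_least (P : nat -> Prop) :
  (exists k, P k) -> exists k, P k /\ forall j, P j -> (k <= j)%N.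
Proof.
move=> [k Pk]; elim/ltn_ind: k Pk => k IH Pk.
case: (classic (exists2 j, P j & (j < k)%N)) => [[j Pj ltjk]|no_less].
  exact: IH ltjk Pj.
exists k; split=> // j Pj; rewrite leqNgt; apply/negP=> ltjk.
by apply: no_less; exists j.
Qed.

Section WellQuasiOrder.
Variables (T : Type) (R : T -> T -> Prop).

Definition wqo := forall s : nat -> T, exists i j, (i < j)%N /\ R (s i) (s j).

Definition bad (s : nat -> T) := forall i j, (i < j)%N -> ~ R (s i) (s j).

Lemma wqo_eventually_good : wqo -> forall s : nat -> T,
  exists N, forall i, (N <= i)%N -> exists2 j, (i < j)%N & R (s i) (s j).
Proof.
move=> wqoR s; apply: NNPP => no_N.
have terminal N : exists i, (N <= i)%N /\ forall j, (i < j)%N -> ~ R (s i) (s j).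
  apply: NNPP => no_i; apply: no_N; exists N => i Ni; apply: NNPP => no_j.
  by apply: no_i; exists i; split=> // j ij Rij; apply: no_j; exists j.
have [te te_spec] := choice _ terminal.
pose u k := iter k (fun i => te i.+1) (te 0).
have u_terminal k j : (u k < j)%N -> ~ R (s (u k)) (s j).
  by case: k => [|k]; [exact: (te_spec 0).2 | exact: (te_spec (u k).+1).2].
have u_inc : {homo u : i j / (i < j)%N}.
  apply: homo_ltn => [y x z|k]; first exact: ltn_trans.
  exact: leq_trans (te_spec (u k).+1).1.
have [i [j [ij Rij]]] := wqoR (s \o u).
exact: u_terminal (u_inc _ _ ij) Rij.
Qed.

Lemma wqo_chain : wqo -> forall s : nat -> T, exists r : nat -> nat,
  (forall k, (r k < r k.+1)%N) /\ (forall k, R (s (r k)) (s (r k.+1))).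
Proof.
move=> wqoR s; have [N good] := wqo_eventually_good wqoR s.
have /choice [nx nx_spec] :
    forall i, exists j, (N <= i)%N -> (i < j)%N /\ R (s i) (s j).
  move=> i; case: (leqP N i) => [/good [j ij Rij]|]; last by exists 0.
  by exists j.
pose r k := iter k nx N.
have r_ge k : (N <= r k)%N.
  elim: k => [|k IH] //=; exact: leq_trans (ltnW (nx_spec _ IH).1).
by exists r; split=> k; case: (nx_spec _ (r_ge k)).
Qed.

Lemma minimal_bad (sz : T -> nat) : (exists s, bad s) ->
  exists2 m, bad m & forall k t, bad t -> (forall i, (i < k)%N -> t i = m i) ->
    (sz (m k) <= sz (t k))%N.
Proof.
move=> [s0 bad_s0].
pose agree k (s t : nat -> T) := forall i, (i < k)%N -> t i = s i.
pose minext k s t := [/\ bad t, agree k s t &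
  forall t', bad t' -> agree k s t' -> (sz (t k) <= sz (t' k))%N].
have /choice [next next_spec] :
    forall k, exists nxk, forall s, bad s -> minext k s (nxk s).
  move=> k; suff /choice [nxk nxk_spec] : forall s, exists t, bad s -> minext k s t.
    by exists nxk.
  move=> s; case: (classic (bad s)) => [bad_s|]; last by exists s.
  have [_ [[t [bad_t st <-]] t_least]] := exists_least
    (ex_intro (fun l => exists t, [/\ bad t, agree k s t & sz (t k) = l]) _
      (ex_intro _ s (And3 bad_s (fun _ _ => erefl) erefl))).
  by exists t => _; split=> // t' bad_t' st'; apply: t_least; exists t'.
pose ts := fix ts k := if k is k'.+1 then next k' (ts k') else s0.
have bad_ts k : bad (ts k) by elim: k => [|k IH] //=; case: (next_spec k _ IH).
have agree_ts k j : (k <= j)%N -> agree k (ts k) (ts j).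
  elim: j => [|j IH]; first by rewrite leqn0 => /eqP ->.
  rewrite leq_eqVlt => /orP [/eqP -> //|kj] i ik /=.
  have [_ agree_next _] := next_spec j _ (bad_ts j).
  by rewrite agree_next ?(leq_trans ik kj) // IH.
pose m k := ts k.+1 k.
have mE i j : (i < j)%N -> m i = ts j i by move=> ij; rewrite (agree_ts i.+1 j).
exists m => [i j ij|k t bad_t tm].
  by rewrite (mE _ _ (ltn_trans ij (ltnSn j))) (mE j j.+1 (ltnSn j)); apply: bad_ts.
case: (next_spec k _ (bad_ts k)) => _ _; apply=> // i ik; rewrite tm //; exact: mE.
Qed.

End WellQuasiOrder.

Lemma leq_wqo : wqo leq.
Proof.
move=> s; have [_ [[k <-] k_least]] :=
  exists_least (ex_intro (fun v => exists k, s k = v) _ (ex_intro _ 0 erefl)).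
by exists k, k.+1; split=> //; apply: k_least; exists k.+1.
Qed.

Lemma wqo_finite_basis (T : eqType) (R : T -> T -> Prop) : wqo R ->
  forall P : T -> Prop, exists A : seq T, (forall a, a \in A -> P a) /\
    (forall a, P a -> exists2 a', a' \in A & R a' a).
Proof.
move=> wqoR P; apply: NNPP => no_basis.
have [x0 Px0] : exists x, P x.
  apply: NNPP => no_P; apply: no_basis; exists [::]; split=> // a Pa.
  by case: no_P; exists a.
have /choice [nx nx_spec] : forall A : seq T, exists x,
    (forall a, a \in A -> P a) -> P x /\ forall a, a \in A -> ~ R a x.
  move=> A; case: (classic (forall a, a \in A -> P a)) => [AP|]; last by exists x0.
  apply: NNPP => no_x; apply: no_basis; exists A; split=> // a Pa.
  apply: NNPP => not_above; apply: no_x; exists a => _; split=> // a' a'A Ra'a.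
  by apply: not_above; exists a'.
pose pre k := iter k (fun A => rcons A (nx A)) [::].
have pre_P k a : a \in pre k -> P a.
  elim: k a => [|k IH] a //=; rewrite mem_rcons in_cons => /orP [/eqP ->|/IH //].
  exact: (nx_spec _ IH).1.
have nx_pre i j : (i < j)%N -> nx (pre i) \in pre j.
  elim: j => [|j IH] //; rewrite ltnS leq_eqVlt /= mem_rcons in_cons.
  by case/orP => [/eqP ->|/IH ->]; rewrite ?eqxx ?orbT.
have [i [j [ij Rij]]] := wqoR (fun k => nx (pre k)).
exact: (nx_spec _ (pre_P j)).2 _ (nx_pre _ _ ij) Rij.
Qed.

Lemma vle_nil b : vle [::] b.
Proof. by exists id; split=> [i j /andP []|]. Qed.

Lemma vle_consr a b y : vle a b -> vle a (y :: b).
Proof.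
move=> [phi [phi_inc phi_b]]; exists (succn \o phi); split=> [i j ij|i ia] /=.
  by rewrite ltnS phi_inc.
exact: phi_b.
Qed.

Lemma vle_cons a b x y : (x <= y)%N -> vle a b -> vle (x :: a) (y :: b).
Proof.
move=> xy [phi [phi_inc phi_b]].
exists (fun i => if i is i'.+1 then (phi i').+1 else 0); split.
  by case=> [|i] [|j] //=; rewrite !ltnS => ij; apply: phi_inc.
by case=> [|i] //= ia; apply: phi_b.
Qed.

Lemma vle_behead_r c y b (psi : nat -> nat) :
  (forall i j, (i < j < size c)%N -> (psi i < psi j)%N) ->
  (forall i, (i < size c)%N -> [/\ 0 < psi i, psi i < size (y :: b)
                                 & nth 0 c i <= nth 0 (y :: b) (psi i)]%N) ->
  vle c b.
Proof.
move=> psi_inc psi_b; exists (predn \o psi); split=> [i j ij|i ic] /=.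
  have [ij' jc] := andP ij; have [pos_i _ _] := psi_b i (ltn_trans ij' jc).
  have := psi_inc _ _ ij; lia.
by have [] := psi_b i ic; case: (psi i).
Qed.

Lemma vle_cons_inv x a y b : vle (x :: a) (y :: b) ->
  (x <= y)%N /\ vle a b \/ vle (x :: a) b.
Proof.
move=> [phi [phi_inc phi_b]].
have phi_pos i : (0 < i < (size a).+1)%N -> (phi 0 < phi i)%N by apply: phi_inc.
case: (posnP (phi 0)) => [phi0|phi0_pos].
  left; split; first by have [_] := phi_b 0 isT; rewrite phi0.
  apply: (vle_behead_r (y := y) (psi := phi \o succn)) => [i j ij|i ia].
    by apply: phi_inc; rewrite !ltnS.
  have [phi_i_lt le_phi_i] := phi_b i.+1 ia; split=> //.
  by rewrite -phi0; apply: phi_pos.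
right; apply: (vle_behead_r (y := y) (psi := phi)) => // i ia.
have [phi_i_lt le_phi_i] := phi_b i ia; split=> //.
case: i ia {phi_i_lt le_phi_i} => [|i] ia //.
exact: ltn_trans phi0_pos (phi_pos i.+1 ia).
Qed.

Lemma vle_wqo : wqo vle.
Proof.
move=> s; apply: NNPP => no_good.
have bad_s : bad vle s by move=> i j ij sij; apply: no_good; exists i, j.
have [m bad_m m_min] := minimal_bad size (ex_intro _ s bad_s).
have mE k : m k = head 0 (m k) :: behead (m k).
  case E: (m k) => //; case: (bad_m k k.+1 (ltnSn k)); rewrite E; exact: vle_nil.
have [r [r_inc r_head]] := wqo_chain leq_wqo (fun k => head 0 (m k)).
have r_mono : {homo r : i j / (i < j)%N} by apply: homo_ltn => //; exact: ltn_trans.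
have head_mono : {homo (fun k => head 0 (m (r k))) : i j / (i <= j)%N}.
  by apply: homo_leq => // y x z; exact: leq_trans.
have r_ge k : (r 0 <= r k)%N by case: k => // k; exact: ltnW (r_mono _ _ _).
(* Replacing the tail of m by the beheaded words along a chain of increasing
   heads keeps the sequence bad but makes m (r 0) shorter. *)
pose t k := if (k < r 0)%N then m k else behead (m (r (k - r 0))).
have bad_t : bad vle t.
  move=> i j ij; rewrite /t; case: (ltnP i (r 0)) => ir; case: (ltnP j (r 0)) => jr.
  - exact: bad_m.
  - move=> vle_ij; apply: (bad_m i (r (j - r 0))); first exact: leq_trans ir (r_ge _).
    by rewrite [m (r _)]mE; apply: vle_consr.
  - by have := leq_ltn_trans ir (ltn_trans ij jr); rewrite ltnn.
  - have ij' : (i - r 0 < j - r 0)%N by rewrite ltn_sub2r // (leq_ltn_trans ir ij).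
    move=> vle_ij; apply: (bad_m _ _ (r_mono _ _ ij')).
    rewrite [m (r (i - _))]mE [m (r (j - _))]mE; apply: vle_cons => //.
    by apply: head_mono; exact: ltnW.
have agree_t i : (i < r 0)%N -> t i = m i by move=> ir; rewrite /t ir.
by have := m_min (r 0) t bad_t agree_t; rewrite /t ltnn subnn [m (r 0)]mE /= ltnn.
Qed.

Fixpoint exp_word (a : seq nat) : seq nat :=
  if a is x :: a' then nseq x 0 ++ map succn (exp_word a') else [::].

Lemma vle_exp_word a b : vle a b ->
  exists f : nat -> nat, subseq (map f (exp_word a)) (exp_word b).
Proof.
elim: b a => [|y b IH] [|x a] vab; try by exists id; rewrite sub0seq.
  by case: vab => phi [_ /(_ 0 isT) []].
case: (vle_cons_inv vab) => [[xy /IH [f f_sub]]|/IH [f f_sub]].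
  exists (fun i => if i is i'.+1 then (f i').+1 else 0).
  rewrite /= map_cat map_nseq -map_comp (eq_map (g := succn \o f)) // map_comp.
  apply: cat_subseq; last exact: map_subseq.
  by rewrite -(subnKC xy) nseqD prefix_subseq.
exists (succn \o f); rewrite map_comp; apply: subseq_trans (suffix_subseq (nseq y 0) _).
exact: map_subseq.
Qed.

Lemma foldl_perm (T : eqType) (A : Type) (f : A -> T -> A) :
  (forall u x y, f (f u x) y = f (f u y) x) ->
  forall s1 s2 u, perm_eq s1 s2 -> foldl f u s1 = foldl f u s2.
Proof.
move=> fC; have foldl_rem s x u : x \in s -> foldl f u s = foldl f (f u x) (rem x s).
  elim: s u => [|y s IH] u //=; rewrite in_cons eq_sym.
  by case: eqVneq => [->|yx] //= xs; rewrite (IH _ xs) fC.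
elim=> [|x s1 IH] s2 u; first by rewrite perm_sym => /perm_nilP ->.
move=> s12; have xs2 : x \in s2 by rewrite -(perm_mem s12) mem_head.
rewrite (foldl_rem _ _ _ xs2) /= (IH (rem x s2)) // -(perm_cons x).
exact: perm_trans s12 (perm_to_rem xs2).
Qed.

Lemma ad_comm (R : pzRingType) (x a b : R) : GRing.comm a b ->
  ((x * a - a * x) * b - b * (x * a - a * x) =
   (x * b - b * x) * a - a * (x * b - b * x))%R.
Proof.
move=> ab; rewrite !(mulrBl, mulrBr) !mulrA -!(mulrA x) ab.
rewrite !opprB !addrA [LHS]addrAC [RHS]addrAC; congr (_ + _)%R; exact: addrAC.
Qed.

Section BracketWords.
Variables (F : fieldType) (n : nat) (g : 'I_n).
Local Notation term := (lterm F n).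
Local Notation z := (TVar (g, 1%N)).

Definition ybracket (t : term) (w : seq nat) : term :=
  foldl (fun u i => TBr u (yvar F g i)) t w.

Lemma ybracket_cat t w v : ybracket t (w ++ v) = ybracket (ybracket t w) v.
Proof. exact: foldl_cat. Qed.

Lemma ybracket_nseq t k i :
  ybracket t (nseq k i) = iter k (fun u => TBr u (yvar F g i)) t.
Proof. by elim: k t => [|k IH] t //=; rewrite IH -iterSr. Qed.

Lemma bterm_exp_word a : bterm F g a = ybracket z (map succn (exp_word a)).
Proof.
rewrite /bterm; suff -> o t :
    foldl (fun t p => iter p.2 (fun u => TBr u (yvar F g p.1)) t) t
          (zip (iota o (size a)) a) = ybracket t (map (addn o) (exp_word a)).
  by congr ybracket; apply: eq_map => i; rewrite add1n.
elim: a o t => [|x a IH] o t //=.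
rewrite IH map_cat ybracket_cat map_nseq addn0 ybracket_nseq -map_comp.
by congr ybracket; apply: eq_map => i /=; rewrite addSnnS.
Qed.

Lemma insubd_ord0 : nat_of_ord (insubd g 0%N) = 0%N.
Proof. by rewrite val_insubd (leq_ltn_trans (leq0n _) (ltn_ord g)). Qed.

Lemma graded_eval_ydiag (phi : gvar n -> 'M[F]_n) i :
  graded_eval phi -> is_diag_mx (phi (insubd g 0%N, i)).
Proof.
move=> phi_graded; apply/is_diag_mxP => r c rc; apply/eqP; apply: contraNT rc.
move=> /phi_graded /andP [rc]; rewrite /gdeg /= insubd_ord0 subn_eq0 => cr.
by rewrite eqn_leq rc cr.
Qed.

Lemma eval_ybracket_perm (phi : gvar n -> 'M[F]_n) t w w' :
  graded_eval phi -> perm_eq w w' ->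
  eval phi (ybracket t w) = eval phi (ybracket t w').
Proof.
move=> phi_graded ww'; pose Y i := phi (insubd g 0%N, i).
have eval_ybracket v u : eval phi (ybracket u v) =
    foldl (fun M i => M *m Y i - Y i *m M)%R (eval phi u) v.
  by elim: v u => [|i v IH] u //=; rewrite IH.
rewrite !eval_ybracket; apply: foldl_perm => // M i j; rewrite mulmxE.
apply: ad_comm; rewrite /GRing.comm -mulmxE /Y.
have /diag_mxP [di ->] := graded_eval_ydiag i phi_graded.
have /diag_mxP [dj ->] := graded_eval_ydiag j phi_graded.
exact: diag_mx_comm.
Qed.

End BracketWords.

Section TIdeal.
Variables (F : fieldType) (n : nat) (g : 'I_n).
Local Notation term := (lterm F n).
Local Notation z := (TVar (g, 1%N)).
Variable J : term -> Prop.
Hypothesis J_Tideal : is_Tideal J.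
Hypothesis identities_in_J : forall u, graded_identity u -> J u.

Lemma Tideal_identity_congr a b :
  J a -> graded_identity (TAdd b (TScale (-1)%R a)) -> J b.
Proof.
move=> Ja ba; have [[J_lie _ J_add _ _] _] := J_Tideal.
apply: J_lie (J_add _ _ (identities_in_J ba) Ja) _.
apply: le_trans (le_addA _ _ _) _; apply: le_trans (le_add (le_refl _) (le_addC _ _)) _.
by apply: le_trans (le_add (le_refl _) (le_addN _)) _; apply: le_add0.
Qed.

Lemma Tideal_ybracket_perm t w w' :
  perm_eq w w' -> J (ybracket g t w) -> J (ybracket g t w').
Proof.
move=> ww' Jw; apply: (Tideal_identity_congr Jw) => phi phi_graded /=.
by rewrite (eval_ybracket_perm _ _ phi_graded ww') scaleN1r subrr.
Qed.

Lemma Tideal_ybracket_cat t w v : J (ybracket g t w) -> J (ybracket g t (w ++ v)).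
Proof.
have [[_ _ _ _ J_br] _] := J_Tideal.
elim/last_ind: v => [|v i IH] Jw; first by rewrite cats0.
by rewrite -rcons_cat -cats1 ybracket_cat; case: (J_br _ (yvar F g i) (IH Jw)).
Qed.

Lemma Tideal_ybracket_map (f : nat -> nat) w : nat_of_ord g != 0%N ->
  J (ybracket g z w) -> J (ybracket g z (map f w)).
Proof.
move=> g_neq0; have [_ [_ J_subst]] := J_Tideal.
pose sigma (x : gvar n) : term :=
  if nat_of_ord x.1 == 0%N then TVar (x.1, f x.2) else TVar x.
have sigma_graded : graded_subst sigma.
  move=> x; exists (sigma x); split; last exact: le_refl.
  by rewrite /sigma; case: ifP => _; [exact: (shom_var F (x.1, f x.2)) | exact: shom_var].
have sigma_ybracket t v :
    tsubst sigma (ybracket g t v) = ybracket g (tsubst sigma t) (map f v).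
  by elim: v t => [|i v IH] t //=; rewrite IH /= /sigma /= insubd_ord0.
by move/(J_subst _ _ sigma_graded); rewrite sigma_ybracket /= /sigma /= (negbTE g_neq0).
Qed.

Lemma Tideal_bterm_vle a b : nat_of_ord g != 0%N ->
  vle a b -> J (bterm F g a) -> J (bterm F g b).
Proof.
move=> g_neq0 /vle_exp_word [f f_sub]; rewrite !bterm_exp_word => Ja.
have /perm_to_subseq [v] : subseq (map succn (map f (exp_word a)))
                                  (map succn (exp_word b)) by rewrite map_subseq.
rewrite perm_sym => /Tideal_ybracket_perm; apply; apply: Tideal_ybracket_cat.
rewrite -map_comp (_ : map _ _ = map (succn \o f \o predn) (map succn (exp_word a))).
  exact: Tideal_ybracket_map.
by rewrite -map_comp.
Qed.

End TIdeal.

Theorem mainTheorem11 (F : fieldType) (n : nat) (g : 'I_n) :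
  (forall s : seq F, exists x : F, x \notin s) ->
  (2 <= n)%N ->
  nat_of_ord g != 0%N ->
  [/\
   (* (i) *)
   (forall a b : seq nat, valid_exp a -> valid_exp b -> vle a b ->
      Tgen (fun u => u = bterm F g a \/ graded_identity u) (bterm F g b)),
   (* (ii) finite basis property of (B_g, <=_{B_g}) *)
   (forall s : nat -> seq nat, (forall k, valid_exp (s k)) ->
      exists r : nat -> nat,
        (forall k, (r k < r k.+1)%N) /\ (forall k, vle (s (r k)) (s (r k.+1)))) &
   (* (iii) *)
   (forall J : lterm F n -> Prop, is_Tideal J ->
      (forall u, graded_identity u -> J u) ->
      exists A' : seq (seq nat),
        (forall a, a \in A' -> valid_exp a /\ J (bterm F g a)) /\
        (forall t,
           Tgen (fun u => (exists a, [/\ valid_exp a, J (bterm F g a) & u = bterm F g a])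
                          \/ graded_identity u) t
           <->
           Tgen (fun u => (exists a, a \in A' /\ u = bterm F g a)
                          \/ graded_identity u) t))].
Proof.
move=> _ _ g_neq0; split.
- move=> a b _ _ ab J J_Tideal J_gen.
  have J_id u : graded_identity u -> J u by move=> ?; apply: J_gen; right.
  by apply: (Tideal_bterm_vle J_Tideal J_id g_neq0 ab); apply: J_gen; left.
- by move=> s _; apply: wqo_chain vle_wqo s.
- move=> J J_Tideal _.
  have [A' [A'_J A'_basis]] :=
    wqo_finite_basis vle_wqo (fun a => valid_exp a /\ J (bterm F g a)).
  exists A'; split=> // t; split=> t_gen J' J'_Tideal J'_gen.
  all: have J'_id u : graded_identity u -> J' u by move=> ?; apply: J'_gen; right.
  + apply: t_gen => // u [[a [a_valid Ja ->]]|/J'_id //].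
    have [a' a'_A' a'a] := A'_basis a (conj a_valid Ja).
    apply: (Tideal_bterm_vle J'_Tideal J'_id g_neq0 a'a).
    by apply: J'_gen; left; exists a'.
  + apply: t_gen => // u [[a [a_A' ->]]|/J'_id //]; apply: J'_gen; left.
    by have [a_valid Ja] := A'_J a a_A'; exists a.
Qed.
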